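(* Let $r_I>r_0>0$, $v_1,v_2>0$, $w_V>0$ and $w_I$ be real numbers with $w_I\ge \frac{w_V v_2}{v_1+v_2}$. Let $n\ge 1$ be an integer and $l_1,\dots,l_{n-1}\ge 0$ be real numbers. Consider the optimization problem (P) described in the context. Then the optimal value of (P) is $$\left(\sum_{i=1}^{n}Y_i\right)^*=\frac{\sum_{i=1}^{n-1}\min\{l_i,2r_0\}+2r_0}{v_1+v_2}\,w_V .$$ Moreover, this optimal value is attained by the feasible point $$D_i^*=\frac{\min\{l_i,2r_I\}}{v_2}w_I,\quad Y_i^*=\frac{\min\{l_i,2r_0\}}{v_1+v_2}w_V\ (i=1,\dots,n-1),\qquad D_n^*=\frac{2r_I}{v_2}w_I,\quad Y_n^*=\frac{2r_0}{v_1+v_2}w_V .$$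
   Context: Model: a vehicle of interest (VoI) moving at speed $v_1$ receives data from $n$ ''helper'' vehicles moving in the opposite direction at speed $v_2$; consecutive helpers are at distances $l_1,\dots,l_{n-1}$; helpers download from an infrastructure point of radio range $r_I$ at rate $w_I$, and deliver to the VoI over vehicle links of range $r_0$ at rate $w_V$. $D_i$ is the amount of data helper $i$ receives from the infrastructure and $Y_i$ the amount it delivers to the VoI. The optimization problem (P), over real variables $D_1,\dots,D_n,Y_1,\dots,Y_n$, is: maximize $\sum_{i=1}^n Y_i$ subject to (i) $0\le D_i\le \frac{2r_I}{v_2}w_I$ for $i=1,\dots,n$; (ii) $\sum_{i=k_1}^{k_2}D_i\le \frac{\sum_{i=k_1}^{k_2-1}\min\{l_i,2r_I\}+2r_I}{v_2}w_I$ for all $1\le k_1\le k_2\le n$; (iii) $0\le Y_i\le \frac{2r_0}{v_1+v_2}w_V$ for $i=1,\dots,n$; (iv) $Y_i\le D_i$ for $i=1,\dots,n$; (v) $\sum_{i=k_1}^{k_2}Y_i\le \frac{\sum_{i=k_1}^{k_2-1}\min\{l_i,2r_0\}+2r_0}{v_1+v_2}w_V$ for all $1\le k_1\le k_2\le n$. (Empty sums are zero.) *)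

(* R : realFieldType. Indices are 0-based:
   helpers i = 0..n-1 (paper's i+1), gaps l i for i = 0..n-2 (paper's l_{i+1}). *)
From mathcomp Require Import all_boot all_order all_algebra.
Set Implicit Arguments. Unset Strict Implicit. Unset Printing Implicit Defensive.
Import Order.TTheory GRing.Theory Num.Theory.
Local Open Scope ring_scope.

Section Problem.
Variables (R : realFieldType) (rI r0 v1 v2 wI wV : R) (n : nat) (l : nat -> R).

Definition feasible (D Y : nat -> R) : Prop :=
  (forall i, (i < n)%N -> 0 <= D i /\ D i <= (2 * rI) / v2 * wI) /\
  (forall k1 k2, (k1 <= k2)%N -> (k2 < n)%N ->
     \sum_(k1 <= i < k2.+1) D i <=
     (\sum_(k1 <= i < k2) Num.min (l i) (2 * rI) + 2 * rI) / v2 * wI) /\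
  (forall i, (i < n)%N -> 0 <= Y i /\ Y i <= (2 * r0) / (v1 + v2) * wV) /\
  (forall i, (i < n)%N -> Y i <= D i) /\
  (forall k1 k2, (k1 <= k2)%N -> (k2 < n)%N ->
     \sum_(k1 <= i < k2.+1) Y i <=
     (\sum_(k1 <= i < k2) Num.min (l i) (2 * r0) + 2 * r0) / (v1 + v2) * wV).

Definition objective (Y : nat -> R) : R := \sum_(0 <= i < n) Y i.

Definition optval : R :=
  (\sum_(0 <= i < n.-1) Num.min (l i) (2 * r0) + 2 * r0) / (v1 + v2) * wV.

Definition Dstar (i : nat) : R :=
  if (i < n.-1)%N then Num.min (l i) (2 * rI) / v2 * wI else (2 * rI) / v2 * wI.

Definition Ystar (i : nat) : R :=
  if (i < n.-1)%N then Num.min (l i) (2 * r0) / (v1 + v2) * wV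
  else (2 * r0) / (v1 + v2) * wV.

End Problem.

From mathcomp Require Import all_boot all_order all_algebra.
Import Order.TTheory GRing.Theory Num.Theory.
Local Open Scope ring_scope.

(* Upper bound: the objective is the window constraint (v) taken over all
   helpers, k1 = 1 and k2 = n.  Attainment: D* and Y* are two instances of one
   staircase profile, whose window sums are the window capacities with the
   last term replaced by something at most 2r; Y* <= D* because r0 <= rI and
   wV / (v1 + v2) <= wI / v2. *)

Section Staircase.
Variables (R : realFieldType) (n : nat) (l : nat -> R).
Hypothesis l_ge0 : forall i, (i < n.-1)%N -> 0 <= l i.

Definition staircase (r s w : R) (i : nat) : R :=
  if (i < n.-1)%N then Num.min (l i) (2 * r) / s * w else 2 * r / s * w.

Lemma staircase_ge0 (r s w : R) (i : nat) :
  0 <= r -> 0 <= s -> 0 <= w -> 0 <= staircase r s w i.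
Proof.
move=> r_ge0 s_ge0 w_ge0; rewrite /staircase.
have two_r_ge0 : 0 <= 2 * r by rewrite mulr_ge0.
by case: ifP => [/l_ge0 li_ge0|_]; rewrite !mulr_ge0 ?invr_ge0 ?le_min ?li_ge0.
Qed.

Lemma staircase_le_cap (r s w : R) (i : nat) :
  0 <= s -> 0 <= w -> staircase r s w i <= 2 * r / s * w.
Proof.
move=> s_ge0 w_ge0; rewrite /staircase; case: ifP => // _.
by rewrite ler_wpM2r // ler_wpM2r ?invr_ge0 // ge_min lexx orbT.
Qed.

Lemma staircase_le (r r' s s' w w' : R) (i : nat) :
  0 <= r -> r <= r' -> 0 < s -> 0 <= w -> w / s <= w' / s' ->
  staircase r s w i <= staircase r' s' w' i.
Proof.
move=> r_ge0 le_rr' s_gt0 w_ge0 le_ws.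
have le_2r : 2 * r <= 2 * r' by rewrite ler_pM2l.
have ws_ge0 : 0 <= w / s by rewrite divr_ge0 // ltW.
rewrite /staircase; case: ifP => [/l_ge0 li_ge0|_]; rewrite !(mulrAC _ _^-1).
  rewrite -!(mulrA (Num.min _ _)); apply: ler_pM => //.
    by rewrite le_min li_ge0 mulr_ge0.
  by rewrite le_min !ge_min lexx le_2r orbT.
by rewrite -!(mulrA (2 * _)) ler_pM // mulr_ge0.
Qed.

Lemma sum_staircase (r s w : R) (k1 k2 : nat) : (k2 <= n.-1)%N ->
  \sum_(k1 <= i < k2) staircase r s w i =
  (\sum_(k1 <= i < k2) Num.min (l i) (2 * r)) / s * w.
Proof.
move=> k2_le; rewrite !mulr_suml; apply: eq_big_nat => i /andP[_ lt_ik2].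
by rewrite /staircase (leq_trans lt_ik2 k2_le).
Qed.

Lemma sum_staircase_window (r s w : R) (k1 k2 : nat) :
  0 <= s -> 0 <= w -> (k1 <= k2)%N -> (k2 < n)%N ->
  \sum_(k1 <= i < k2.+1) staircase r s w i <=
  (\sum_(k1 <= i < k2) Num.min (l i) (2 * r) + 2 * r) / s * w.
Proof.
move=> s_ge0 w_ge0 le_k12 lt_k2n.
have k2_le : (k2 <= n.-1)%N by rewrite -ltnS prednK // (leq_ltn_trans _ lt_k2n).
rewrite big_nat_recr //= sum_staircase // (mulrDl _ (2 * r)) (mulrDl _ (2 * r / s)).
by rewrite lerD2l staircase_le_cap.
Qed.

Lemma sum_staircase_all (r s w : R) : (0 < n)%N ->
  \sum_(0 <= i < n) staircase r s w i =
  (\sum_(0 <= i < n.-1) Num.min (l i) (2 * r) + 2 * r) / s * w.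
Proof.
move=> n_gt0; rewrite -{1}(prednK n_gt0) big_nat_recr //= sum_staircase //.
by rewrite /staircase ltnn (mulrDl _ (2 * r)) (mulrDl _ (2 * r / s)).
Qed.

End Staircase.

Lemma objective_le_optval (R : realFieldType) (rI r0 v1 v2 wI wV : R) (n : nat)
    (l : nat -> R) (D Y : nat -> R) :
  (0 < n)%N -> feasible rI r0 v1 v2 wI wV n l D Y ->
  objective n Y <= optval r0 v1 v2 wV n l.
Proof.
move=> n_gt0 [_ [_ [_ [_ window_Y]]]].
by rewrite /objective -{1}(prednK n_gt0) window_Y // prednK.
Qed.

Theorem theorem2 (R : realFieldType) (rI r0 v1 v2 wI wV : R) (n : nat)
    (l : nat -> R) :
  0 < r0 -> r0 < rI -> 0 < v1 -> 0 < v2 -> 0 < wV ->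
  wV * v2 / (v1 + v2) <= wI ->
  (1 <= n)%N ->
  (forall i, (i < n.-1)%N -> 0 <= l i) ->
  (forall D Y : nat -> R, feasible rI r0 v1 v2 wI wV n l D Y ->
     objective n Y <= optval r0 v1 v2 wV n l) /\
  feasible rI r0 v1 v2 wI wV n l (Dstar rI v2 wI n l) (Ystar r0 v1 v2 wV n l) /\
  objective n (Ystar r0 v1 v2 wV n l) = optval r0 v1 v2 wV n l.
Proof.
move=> r0_gt0 lt_r0rI v1_gt0 v2_gt0 wV_gt0 wI_ge n_gt0 l_ge0.
have v12_gt0 : 0 < v1 + v2 by rewrite addr_gt0.
have rate_le : wV / (v1 + v2) <= wI / v2 by rewrite ler_pdivlMr // mulrAC.
have wI_ge0 : 0 <= wI.
  by apply: le_trans wI_ge; rewrite !mulr_ge0 ?invr_ge0 // ltW.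
have [r0_ge0 rI_ge0] : 0 <= r0 /\ 0 <= rI by rewrite !ltW // (lt_trans r0_gt0).
have [v2_ge0 v12_ge0 wV_ge0] : [/\ 0 <= v2, 0 <= v1 + v2 & 0 <= wV] by rewrite !ltW.
split; first by move=> D Y; apply: objective_le_optval.
split; last exact: sum_staircase_all.
split; [|split; [|split; [|split]]].
- by move=> i _; rewrite staircase_ge0 ?staircase_le_cap.
- by move=> k1 k2; apply: sum_staircase_window.
- by move=> i _; rewrite staircase_ge0 ?staircase_le_cap.
- by move=> i _; apply: staircase_le (ltW lt_r0rI) v12_gt0 wV_ge0 rate_le.
- by move=> k1 k2; apply: sum_staircase_window.
Qed.
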